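(* Let $\sigma=\{\sigma_n\}$ and $\omega=\{\omega_n\}$ be quantum sources on the same sequence of finite-dimensional Hilbert spaces, $t\in(0,1)$, and $\rho_n=t\sigma_n+(1-t)\omega_n$. Then the strong converse rate of $\rho$ is \[ \mathcal{R}^*=\underline{S}(\rho)=\min\big[\underline{S}(\sigma),\underline{S}(\omega)\big]. \]
   Context: For self-adjoint $A=\sum_i\lambda_i|i\rangle\langle i|$, $\{A\ge0\}:=\sum_{\lambda_i\ge0}|i\rangle\langle i|$ and $\{A\ge B\}:=\{A-B\ge0\}$. For a source $\tau=\{\tau_n\}$, the spectral inf-entropy rate is $\underline{S}(\tau)=\sup\{\gamma:\ \limsup_n\mathrm{Tr}[\{\tau_n\ge e^{-n\gamma}I_n\}(\tau_n-e^{-n\gamma}I_n)]=0\}$ (natural logarithms). The strong converse rate $\mathcal{R}^*$ of a source is the supremum of rates $R$ such that every compression scheme of rate $R$ has entanglement fidelity tending to $0$; it equals $\underline{S}$ of the source. *)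

From HB Require Import structures.
From mathcomp Require Import all_boot all_order all_algebra.
From mathcomp Require Import sesquilinear spectral.
From mathcomp Require Import complex.
From mathcomp Require Import all_classical all_reals all_analysis.
Set Implicit Arguments. Unset Strict Implicit. Unset Printing Implicit Defensive.
Import Order.TTheory GRing.Theory Num.Theory.
Local Open Scope ring_scope.
Local Open Scope complex_scope.

Definition density_mx (R : realType) (d : nat) (A : 'M[R[i]]_d) : Prop :=
  [/\ A \is hermsymmx,
      (forall v : 'rV[R[i]]_d, 0 <= (v *m A *m (map_mx Num.conj v)^T) 0 0)
    & \tr A = 1].

Definition quantum_source (R : realType) (d : nat -> nat)
  (tau : forall n, 'M[R[i]]_(d n)) : Prop := forall n, density_mx (tau n).

(* Spectral projection {A >= 0} = sum of eigenprojections for eigenvalues >= 0,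
   computed from the unitary diagonalisation A = P^-1 diag(lambda) P. *)
Definition nonneg_proj (R : realType) (d : nat) (A : 'M[R[i]]_d) : 'M[R[i]]_d :=
  invmx (spectralmx A)
  *m diag_mx (\row_j (if 0 <= spectral_diag A 0 j then 1 else 0))
  *m spectralmx A.

(* Tr[{tau_n >= c I}(tau_n - c I)] with c = e^{-n gamma} (real part; it is real). *)
Definition spec_term (R : realType) (d : nat -> nat)
  (tau : forall n, 'M[R[i]]_(d n)) (gamma : R) (n : nat) : R :=
  let c : R[i] := (expR (- (n%:R * gamma)))%:C in
  complex.Re (\tr (nonneg_proj (tau n - c%:M) *m (tau n - c%:M))).

Definition spec_inf_entropy_rate (R : realType) (d : nat -> nat)
  (tau : forall n, 'M[R[i]]_(d n)) : \bar R :=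
  ereal_sup [set (gamma%:E)%E | gamma in
     [set gamma : R | limn_esup (fun n => (spec_term tau gamma n)%:E) = 0%E]].

From HB Require Import structures.
From mathcomp Require Import all_boot all_order all_algebra.
From mathcomp Require Import sesquilinear spectral complex.
From mathcomp Require Import all_classical all_reals all_analysis.
From mathcomp Require Import ring.
Import Order.TTheory GRing.Theory Num.Theory.

Set Implicit Arguments.
Unset Strict Implicit.
Unset Printing Implicit Defensive.

Local Open Scope ring_scope.
Local Open Scope sesquilinear_scope.

(* Let T(X) = Tr[{X >= 0} X], the trace of the positive part of a Hermitian X,
   and call gamma admissible for tau when T(tau_n - c_n) -> 0, c_n = e^(-n gamma).
   Diagonalising X shows Tr[Q X] <= T(X) for every Q = V^-1 diag(D) V with V
   unitary and 0 <= D <= 1, with equality at Q = {X >= 0}, while Tr[Q M] >= 0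
   for M >= 0.  Hence T is convex and monotone in the Loewner order.  Convexity
   makes every rate admissible for both sigma and omega admissible for rho, so
   min <= S(rho).  Monotonicity gives t T(sigma_n - c_n / t) <= T(rho_n - c_n),
   and c_n / t <= e^(-n gamma') for large n when gamma' < gamma; so every rate
   below an admissible rate of rho is admissible for sigma, and symmetrically
   for omega: S(rho) <= min. *)

Section PositivePartTrace.
Variables (C : numClosedFieldType) (n : nat).
Implicit Types (a : C) (M V U W X Y : 'M[C]_n) (D L : 'rV[C]_n).

Definition psdmx M := forall v : 'rV[C]_n, 0 <= (v *m M *m (map_mx Num.conj v)^T) 0 0.

Definition unitary_diag V D := invmx V *m diag_mx D *m V.

Lemma hermsymmx_entryP X : reflect (forall i j, X i j = (X j i)^*) (X \is hermsymmx).
Proof.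
apply: (iffP (is_hermitianmxP _ _ _)) => [HX i j | HX].
  by rewrite {1}HX !mxE expr0 mul1r.
by apply/matrixP => i j; rewrite !mxE expr0 mul1r HX.
Qed.

Lemma hermsymmxB_scalar X a : a^* = a -> X \is hermsymmx -> X - a%:M \is hermsymmx.
Proof.
move=> aR /hermsymmx_entryP HX; apply/hermsymmx_entryP => i j.
rewrite !mxE HX rmorphB rmorphMn eq_sym; congr (_ - _ *+ _); exact: esym aR.
Qed.

Lemma hermsymmxD X Y : X \is hermsymmx -> Y \is hermsymmx -> X + Y \is hermsymmx.
Proof.
move=> /hermsymmx_entryP HX /hermsymmx_entryP HY; apply/hermsymmx_entryP => i j.
by rewrite !mxE HX HY rmorphD.
Qed.

Lemma hermsymmxZ a X : a^* = a -> X \is hermsymmx -> a *: X \is hermsymmx.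
Proof.
move=> aR /hermsymmx_entryP HX; apply/hermsymmx_entryP => i j.
by rewrite !mxE HX rmorphM /=; congr (_ * _); exact: esym aR.
Qed.

Lemma psdmx1 : psdmx 1%:M.
Proof.
move=> v; rewrite mulmx1 !mxE; apply: sumr_ge0 => j _.
by rewrite !mxE mul_conjC_ge0.
Qed.

Lemma psdmxZ a M : 0 <= a -> psdmx M -> psdmx (a *: M).
Proof.
move=> a0 HM v; rewrite -scalemxAr -scalemxAl mxE.
exact: mulr_ge0.
Qed.

Lemma mxtrace_diag_mull D M : \tr (diag_mx D *m M) = \sum_k D 0 k * M k k.
Proof. by apply: eq_bigr => k _; rewrite mul_diag_mx mxE. Qed.

Lemma unitarymx_col_norm W j : W \is unitarymx ->
  \sum_k W k j * (W k j)^* = 1.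
Proof.
rewrite -trmxC_unitary => /unitarymxP /matrixP /(_ j j).
rewrite trmxCK !mxE eqxx mulr1n => <-.
by apply: eq_bigr => k _; rewrite !mxE mulrC.
Qed.

Lemma mxtrace_unitary_diag_mul V U D L :
  V \is unitarymx -> U \is unitarymx ->
  let W := V *m U^t* in
  \tr (unitary_diag V D *m unitary_diag U L) =
  \sum_j L 0 j * \sum_k D 0 k * (W k j * (W k j)^*).
Proof.
move=> uV uU W; rewrite /unitary_diag !invmx_unitary //.
have entry k : (W *m diag_mx L *m W^t*) k k = \sum_j L 0 j * (W k j * (W k j)^*).
  by rewrite mul_mx_diag !mxE; apply: eq_bigr => j _; rewrite !mxE mulrCA mulrA.
have -> : V^t* *m diag_mx D *m V *m (U^t* *m diag_mx L *m U) =
    V^t* *m (diag_mx D *m W *m diag_mx L *m U) by rewrite !mulmxA.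
rewrite mxtrace_mulC.
have -> : diag_mx D *m W *m diag_mx L *m U *m V^t* =
    diag_mx D *m (W *m diag_mx L *m W^t*).
  by rewrite trmx_mul map_mxM trmxCK !mulmxA.
rewrite mxtrace_diag_mull; under eq_bigr do rewrite entry big_distrr /=.
rewrite exchange_big /=; apply: eq_bigr => j _; rewrite big_distrr /=.
by apply: eq_bigr => k _; rewrite mulrCA.
Qed.

Lemma mxtrace_unitary_diag_mul_same U D L : U \is unitarymx ->
  \tr (unitary_diag U D *m unitary_diag U L) = \sum_j L 0 j * D 0 j.
Proof.
move=> uU; rewrite mxtrace_unitary_diag_mul // (unitarymxP uU).
apply: eq_bigr => j _; congr (_ * _).
rewrite (bigD1 j) //= big1 ?addr0 => [|k /negbTE kj]; last first.
  by rewrite !mxE kj mulr0n mul0r mulr0.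
by rewrite !mxE eqxx mulr1n conjC1 !mulr1.
Qed.

Lemma mxtrace_unitary_diag_mul_le V U D L :
  V \is unitarymx -> U \is unitarymx -> L \is a realmx ->
  (forall k, 0 <= D 0 k <= 1) ->
  \tr (unitary_diag V D *m unitary_diag U L) <=
  \sum_j L 0 j * (if 0 <= L 0 j then 1 else 0).
Proof.
move=> uV uU /mxOverP realL D01; rewrite mxtrace_unitary_diag_mul //.
set W := V *m U^t*; apply: ler_sum => j _.
have uW : W \is unitarymx by rewrite mul_unitarymx ?trmxC_unitary.
set q := \sum_k _.
have q_ge0 : 0 <= q.
  apply: sumr_ge0 => k _; apply: mulr_ge0; first by case/andP: (D01 k).
  exact: mul_conjC_ge0.
have q_le1 : q <= 1.
  rewrite -(unitarymx_col_norm j uW); apply: ler_sum => k _.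
  by case/andP: (D01 k) => D0 D1; rewrite ler_piMl ?mul_conjC_ge0.
case: ifP => [L0 | /negbT L0]; first by rewrite mulr1 ler_piMr.
by rewrite mulr0 mulr_le0_ge0 // ltW // real_ltNge ?rpred0.
Qed.

Lemma mxtrace_unitary_diag_mul_ge0 V D M :
  V \is unitarymx -> (forall k, 0 <= D 0 k) -> psdmx M ->
  0 <= \tr (unitary_diag V D *m M).
Proof.
move=> uV D0 psdM; rewrite /unitary_diag invmx_unitary // -!mulmxA mxtrace_mulC.
rewrite -!mulmxA mxtrace_diag_mull; apply: sumr_ge0 => k _.
apply: mulr_ge0 => //; have := psdM (row k V); congr (0 <= _).
rewrite -mulmxA !mxE; apply: eq_bigr => j _; rewrite !mxE; congr (_ * _).
by apply: eq_bigr => l _; rewrite !mxE.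
Qed.

Definition nonneg_indicator L : 'rV[C]_n := \row_j (if 0 <= L 0 j then 1 else 0).

(* [nonneg_proj] of the statement, over an arbitrary [numClosedFieldType]. *)
Definition nonneg_projmx X :=
  unitary_diag (spectralmx X) (nonneg_indicator (spectral_diag X)).

Definition pos_trace X := \tr (nonneg_projmx X *m X).

Lemma hermsymmx_unitary_diag X : X \is hermsymmx ->
  X = unitary_diag (spectralmx X) (spectral_diag X).
Proof. by move=> /hermitian_normalmx /orthomx_spectralP. Qed.

Lemma nonneg_indicator_01 L k : 0 <= nonneg_indicator L 0 k <= 1.
Proof. by rewrite mxE; case: ifP; rewrite ?lexx ?ler01. Qed.

Lemma pos_traceE X : X \is hermsymmx ->
  pos_trace X =
  \sum_j spectral_diag X 0 j * (if 0 <= spectral_diag X 0 j then 1 else 0).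
Proof.
move=> hX; rewrite /pos_trace {2}(hermsymmx_unitary_diag hX) /nonneg_projmx.
rewrite mxtrace_unitary_diag_mul_same ?spectral_unitarymx //.
by apply: eq_bigr => j _; rewrite mxE.
Qed.

Lemma pos_trace_ge0 X : X \is hermsymmx -> 0 <= pos_trace X.
Proof.
move=> hX; rewrite pos_traceE //; apply: sumr_ge0 => j _.
by case: ifP => [L0|_]; rewrite ?mulr1 ?mulr0.
Qed.

Lemma mxtrace_nonneg_projmx_le X Y : X \is hermsymmx ->
  \tr (nonneg_projmx Y *m X) <= pos_trace X.
Proof.
move=> hX; rewrite pos_traceE // {1}(hermsymmx_unitary_diag hX).
apply: mxtrace_unitary_diag_mul_le; rewrite ?spectral_unitarymx //.
  exact: hermitian_spectral_diag_real.
exact: nonneg_indicator_01.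
Qed.

Lemma mxtrace_nonneg_projmx_ge0 Y M : psdmx M -> 0 <= \tr (nonneg_projmx Y *m M).
Proof.
apply: mxtrace_unitary_diag_mul_ge0; first exact: spectral_unitarymx.
by move=> k; case/andP: (nonneg_indicator_01 (spectral_diag Y) k).
Qed.

Lemma pos_trace_le X Y : Y \is hermsymmx -> psdmx (Y - X) -> pos_trace X <= pos_trace Y.
Proof.
move=> hY psdYX.
have -> : pos_trace X =
    \tr (nonneg_projmx X *m Y) - \tr (nonneg_projmx X *m (Y - X)).
  by rewrite mulmxBr raddfB opprB addrC subrK.
by rewrite lerBDr ler_wpDr ?mxtrace_nonneg_projmx_ge0 ?mxtrace_nonneg_projmx_le.
Qed.

Lemma pos_trace_convex X Y a : X \is hermsymmx -> Y \is hermsymmx -> 0 <= a <= 1 ->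
  pos_trace (a *: X + (1 - a) *: Y) <= a * pos_trace X + (1 - a) * pos_trace Y.
Proof.
move=> hX hY /andP[a0 a1]; rewrite /pos_trace mulmxDr -!scalemxAr mxtraceD !mxtraceZ.
by apply: lerD; apply: ler_wpM2l; rewrite ?subr_ge0 ?mxtrace_nonneg_projmx_le.
Qed.

Lemma pos_trace_scale_ge X a : 0 <= a -> a *: X \is hermsymmx ->
  a * pos_trace X <= pos_trace (a *: X).
Proof.
move=> a0 haX; rewrite /pos_trace -mxtraceZ scalemxAr.
exact: mxtrace_nonneg_projmx_le.
Qed.

End PositivePartTrace.

Local Open Scope complex_scope.

Section ShiftedPositivePart.
Variables (R : realType) (m : nat).
Implicit Types (A B : 'M[R[i]]_m) (c t : R).

Lemma lec_Re (z w : R[i]) : z <= w -> complex.Re z <= complex.Re w.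
Proof. by rewrite lecE => /andP[]. Qed.

Lemma Re_realM (x : R) (z : R[i]) : complex.Re (x%:C * z) = x * complex.Re z.
Proof. by case: z => a b /=; rewrite mul0r subr0. Qed.

Lemma hermsymmx_shift A c : A \is hermsymmx -> A - c%:C%:M \is hermsymmx.
Proof. exact/hermsymmxB_scalar/conjc_real. Qed.

Lemma hermsymmx_mix A B t : A \is hermsymmx -> B \is hermsymmx ->
  t%:C *: A + (1 - t)%:C *: B \is hermsymmx.
Proof.
by move=> hA hB; apply: hermsymmxD; apply: hermsymmxZ => //; apply: conjc_real.
Qed.

Lemma pos_trace_shift_le A (c c' : R) : A \is hermsymmx -> c <= c' ->
  pos_trace (A - c'%:C%:M) <= pos_trace (A - c%:C%:M).
Proof.
move=> hA cc'; apply: pos_trace_le; first exact: hermsymmx_shift.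
rewrite opprB addrC -addrA addKr -raddfB -rmorphB /= -scalemx1.
by apply: psdmxZ; rewrite ?ler0c ?subr_ge0 //; apply: psdmx1.
Qed.

Lemma pos_trace_mix_shift_le A B t c :
  A \is hermsymmx -> B \is hermsymmx -> 0 <= t <= 1 ->
  pos_trace (t%:C *: A + (1 - t)%:C *: B - c%:C%:M) <=
  t%:C * pos_trace (A - c%:C%:M) + (1 - t)%:C * pos_trace (B - c%:C%:M).
Proof.
move=> hA hB /andP[t0 t1]; rewrite [(1 - t)%:C]rmorphB rmorph1.
have -> : t%:C *: A + (1 - t%:C) *: B - c%:C%:M =
    t%:C *: (A - c%:C%:M) + (1 - t%:C) *: (B - c%:C%:M).
  by rewrite !scalerBr addrACA -opprD -scalerDl subrKC scale1r.
apply: pos_trace_convex; rewrite ?hermsymmx_shift // ler0c t0 /=.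
by rewrite lecE /= eqxx.
Qed.

Lemma pos_trace_mix_shift_ge A B t c :
  A \is hermsymmx -> B \is hermsymmx -> psdmx B -> 0 < t <= 1 ->
  t%:C * pos_trace (A - (c / t)%:C%:M) <=
  pos_trace (t%:C *: A + (1 - t)%:C *: B - c%:C%:M).
Proof.
move=> hA hB psdB /andP[t0 t1].
have tA_shift : t%:C *: (A - (c / t)%:C%:M) = t%:C *: A - c%:C%:M.
  by rewrite scalerBr scale_scalar_mx -rmorphM mulrC divfK ?gt_eqF.
apply: le_trans (pos_trace_scale_ge _ _) _.
- by rewrite ler0c ltW.
- by rewrite tA_shift; apply/hermsymmx_shift/hermsymmxZ => //; apply: conjc_real.
apply: pos_trace_le; first by rewrite hermsymmx_shift ?hermsymmx_mix.
rewrite tA_shift opprB addrA subrK (addrC (t%:C *: A)) addrK.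
by apply: psdmxZ; rewrite ?ler0c ?subr_ge0.
Qed.

End ShiftedPositivePart.

Import numFieldNormedType.Exports.
Local Open Scope classical_set_scope.

Lemma lee_ltEFinP (R : realType) (x y : \bar R) :
  (forall r : R, (r%:E < x)%E -> (r%:E <= y)%E) -> (x <= y)%E.
Proof.
case: x => [s | | ] H; last exact: leNye.
  apply/lee_subgt0Pr => e e0; rewrite -EFinB; apply: H.
  by rewrite lte_fin gtrBl.
by rewrite leye_eq; apply/eqP/eq_infty => r; apply: H; apply: ltry.
Qed.

Lemma limn_esup_EFin_eq0 (R : realType) (u : R ^nat) : (forall n, 0 <= u n) ->
  limn_esup (fun n => (u n)%:E) = 0%E <-> u @ \oo --> 0.
Proof.
move=> u0; split => [u_esup0 | u_cvg0].
  have : (fun n => (u n)%:E) @ \oo --> 0%E.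
    by apply: limn_esup_le_cvg; rewrite ?u_esup0 // => n; rewrite lee_fin.
  by move/fine_cvg.
have : (fun n => (u n)%:E) @ \oo --> 0%E by apply: cvg_EFin => //; apply: nearW.
by case/cvg_limn_einf_sup.
Qed.

Lemma expRN_div_le_near (R : realType) (t g g' : R) : 0 < t -> g' < g ->
  \forall n \near \oo, expR (- (n%:R * g)) / t <= expR (- (n%:R * g')).
Proof.
move=> t0 g'g; have gap0 : 0 < g - g' by rewrite subr_gt0.
near=> n.
have -> : expR (- (n%:R * g)) = expR (- (n%:R * (g - g'))) * expR (- (n%:R * g')).
  by rewrite -expRD; congr expR; ring.
rewrite ler_pdivrMr // mulrC ler_pM2l ?expR_gt0 // expRN.
rewrite -[X in X <= _]div1r ler_pdivrMr ?expR_gt0 //.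
have large_n : 1 <= t * (n%:R * (g - g')).
  by rewrite -ler_pdivrMl // -ler_pdivrMr //; near: n; apply: nbhs_infty_ger.
apply: (le_trans large_n); rewrite ler_pM2l //.
by apply: le_trans (expR_ge1Dx _); rewrite lerDr.
Unshelve. all: by end_near.
Qed.

Section Sources.
Variables (R : realType) (d : nat -> nat).
Implicit Types (tau sigma omega : forall n, 'M[R[i]]_(d n)) (g t : R).

Definition hermitian_source tau := forall n, tau n \is hermsymmx.

Definition mix_source t sigma omega : forall n, 'M[R[i]]_(d n) :=
  fun n => t%:C *: sigma n + (1 - t)%:C *: omega n.

Lemma quantum_source_herm tau : quantum_source tau -> hermitian_source tau.
Proof. by move=> qtau n; case: (qtau n). Qed.

Lemma hermitian_mix_source t sigma omega :
  hermitian_source sigma -> hermitian_source omega ->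
  hermitian_source (mix_source t sigma omega).
Proof. by move=> hs ho n; apply: hermsymmx_mix. Qed.

Lemma mix_sourceC t sigma omega :
  mix_source t sigma omega = mix_source (1 - t) omega sigma.
Proof.
rewrite /mix_source subKr.
by apply: functional_extensionality_dep => n; rewrite addrC.
Qed.

Lemma spec_termE tau g n : spec_term tau g n =
  complex.Re (pos_trace (tau n - (expR (- (n%:R * g)))%:C%:M)).
Proof. by []. Qed.

Lemma spec_term_ge0 tau g n : hermitian_source tau -> 0 <= spec_term tau g n.
Proof. by move=> htau; exact: lec_Re (pos_trace_ge0 (hermsymmx_shift _ (htau n))). Qed.

Lemma spec_term_le tau g g' n : hermitian_source tau -> g' <= g ->
  spec_term tau g' n <= spec_term tau g n.
Proof.
move=> htau g'g; apply/lec_Re/pos_trace_shift_le => //.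
by rewrite ler_expR lerN2 ler_wpM2l.
Qed.

Lemma spec_term_mix_le t sigma omega g n :
  hermitian_source sigma -> hermitian_source omega -> 0 <= t <= 1 ->
  spec_term (mix_source t sigma omega) g n <=
  t * spec_term sigma g n + (1 - t) * spec_term omega g n.
Proof.
move=> hs ho t01; rewrite !spec_termE -!Re_realM -raddfD /=.
exact/lec_Re/pos_trace_mix_shift_le.
Qed.

Lemma spec_term_mix_ge t sigma omega g g' n :
  hermitian_source sigma -> quantum_source omega -> 0 < t <= 1 ->
  expR (- (n%:R * g)) / t <= expR (- (n%:R * g')) ->
  t * spec_term sigma g' n <= spec_term (mix_source t sigma omega) g n.
Proof.
move=> hs qo /andP[t0 t1] shift_le; have [ho psdo _] := qo n.
rewrite !spec_termE -Re_realM /mix_source; apply: lec_Re.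
apply: le_trans _ (pos_trace_mix_shift_ge _ (hs n) ho psdo _); last by rewrite t0.
apply: ler_wpM2l; first by rewrite ler0c ltW.
exact: pos_trace_shift_le.
Qed.

Definition null_rates tau :=
  [set g | limn_esup (fun n => (spec_term tau g n)%:E) = 0%E].

Lemma null_ratesP tau g : hermitian_source tau ->
  null_rates tau g <-> spec_term tau g @ \oo --> 0.
Proof. by move=> htau; apply: limn_esup_EFin_eq0 => n; apply: spec_term_ge0. Qed.

Lemma null_rates_le tau g g' : hermitian_source tau -> g' <= g ->
  null_rates tau g -> null_rates tau g'.
Proof.
move=> htau g'g /(null_ratesP _ htau) cvg_g; apply/(null_ratesP _ htau).
apply: (squeeze_cvgr _ (cvg_cst 0) cvg_g); apply: nearW => n.
by rewrite spec_term_ge0 ?spec_term_le.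
Qed.

Lemma null_rates_mix t sigma omega g :
  hermitian_source sigma -> hermitian_source omega -> 0 <= t <= 1 ->
  null_rates sigma g -> null_rates omega g ->
  null_rates (mix_source t sigma omega) g.
Proof.
move=> hs ho t01 /(null_ratesP _ hs) cvg_s /(null_ratesP _ ho) cvg_o.
have hrho := hermitian_mix_source t hs ho.
apply/(null_ratesP _ hrho).
have cvg_mix : (fun n => t * spec_term sigma g n + (1 - t) * spec_term omega g n)
    @ \oo --> t * 0 + (1 - t) * 0.
  exact: cvgD (cvgMl_tmp (a := t) cvg_s) (cvgMl_tmp (a := 1 - t) cvg_o).
rewrite !mulr0 addr0 in cvg_mix; apply: (squeeze_cvgr _ (cvg_cst 0) cvg_mix).
by apply: nearW => n; rewrite spec_term_ge0 ?spec_term_mix_le.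
Qed.

Lemma null_rates_mix_l t sigma omega g g' :
  hermitian_source sigma -> quantum_source omega -> 0 < t <= 1 ->
  null_rates (mix_source t sigma omega) g -> g' < g -> null_rates sigma g'.
Proof.
move=> hs qo t01 rho_g g'g; have t0 : 0 < t by case/andP: t01.
have hrho := hermitian_mix_source t hs (quantum_source_herm qo).
move/(null_ratesP _ hrho): rho_g => /(cvgMl_tmp (a := t^-1)).
rewrite mulr0 => cvg_rho.
apply/(null_ratesP _ hs); apply: (squeeze_cvgr _ (cvg_cst 0) cvg_rho).
near=> n; rewrite spec_term_ge0 //= -(ler_pM2l t0) mulrA mulfV ?gt_eqF // mul1r.
apply: spec_term_mix_ge => //; near: n.
exact: expRN_div_le_near.
Unshelve. all: by end_near.
Qed.

Lemma null_rates_lt_rate tau g : hermitian_source tau ->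
  (g%:E < spec_inf_entropy_rate tau)%E -> null_rates tau g.
Proof.
move=> htau /ereal_sup_gt[_ [g' tau_g' <-]]; rewrite lte_fin => /ltW gg'.
exact: null_rates_le htau gg' tau_g'.
Qed.

Lemma spec_inf_entropy_rate_le tau tau' :
  (forall g g', null_rates tau g -> g' < g -> null_rates tau' g') ->
  (spec_inf_entropy_rate tau <= spec_inf_entropy_rate tau')%E.
Proof.
move=> below; apply: ge_ereal_sup => _ [g tau_g <-]; apply: lee_ltEFinP => g'.
rewrite lte_fin => g'g; apply: ereal_sup_ubound.
by exists g'; first exact: below _ _ tau_g g'g.
Qed.

End Sources.

Theorem mainTheorem6 (R : realType) (d : nat -> nat)
  (sigma omega : forall n, 'M[R[i]]_(d n)) (t : R) :
  quantum_source sigma -> quantum_source omega ->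
  0 < t < 1 ->
  spec_inf_entropy_rate
    (fun n => t%:C%C *: sigma n + (1 - t)%:C%C *: omega n) =
  Order.min (spec_inf_entropy_rate sigma) (spec_inf_entropy_rate omega).
Proof.
move=> qs qo /andP[t0 t1].
have [hs ho] := (quantum_source_herm qs, quantum_source_herm qo).
have t01 : 0 < t <= 1 by rewrite t0 ltW.
have t'01 : 0 < 1 - t <= 1 by rewrite subr_gt0 t1 gerBl ltW.
apply: le_anti; rewrite -/(mix_source t sigma omega) le_min; apply/andP; split.
- apply/andP; split; apply: spec_inf_entropy_rate_le => g g' rho_g g'g.
    exact: null_rates_mix_l rho_g g'g.
  by rewrite mix_sourceC in rho_g; apply: null_rates_mix_l rho_g g'g.
apply: lee_ltEFinP => g; rewrite lt_min => /andP[gs go].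
apply: ereal_sup_ubound; exists g => //.
apply: null_rates_mix => //; first by rewrite (ltW t0) (ltW t1).
  exact: null_rates_lt_rate gs.
exact: null_rates_lt_rate go.
Qed.
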